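(* There exists an invertible $18\times18$ binary matrix such that the corresponding linear kernel has partial distance sequence $(1,2,2,2,2,2,4,4,4,4,6,6,8,8,8,8,8,16)$. Consequently $E_{18}\ge\frac1{18}\sum_{i=0}^{17}\log_{18}D_{min}^{(i)}\approx0.49521$.
   Context: A kernel of dimension $\ell$ is a bijection $g:\{0,1\}^\ell\to\{0,1\}^\ell$; a linear kernel is $g({\bf u})={\bf u}G$ over $\mathbb{F}_2$ for an invertible $\ell\times\ell$ binary matrix $G$. ${\bf a}\bullet{\bf b}$ denotes concatenation, $d_H$ Hamming distance. Partial distances: $D_{min}^{(i)}=\min\{d_H(g({\bf w}\bullet 0\bullet{\bf u}),g({\bf w}\bullet 1\bullet {\bf v})) : {\bf w}\in\{0,1\}^i,\ {\bf u},{\bf v}\in\{0,1\}^{\ell-i-1}\}$, $i=0,\dots,\ell-1$; exponent $E(g)=\frac1\ell\sum_{i}\log_\ell D_{min}^{(i)}$; $E_\ell=\max_g E(g)$ over all kernels of dimension $\ell$. *)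

From HB Require Import structures.
From mathcomp Require Import all_boot all_order all_algebra.
From Stdlib Require Import Reals.
Set Implicit Arguments. Unset Strict Implicit. Unset Printing Implicit Defensive.
Import GRing.Theory.

Notation bvec l := 'rV['F_2]_l.

Definition dH (l : nat) (a b : bvec l) : nat :=
  #|[set j : 'I_l | a ord0 j != b ord0 j]|.

Definition is_kernel (l : nat) (g : bvec l -> bvec l) : Prop := bijective g.

Definition lin_kernel (l : nat) (G : 'M['F_2]_l) : bvec l -> bvec l :=
  fun u => mulmx u G.

(* pairs (x, y) = (w • 0 • u, w • 1 • v) with w of length i *)
Definition split_pair (l : nat) (i : 'I_l) (p : bvec l * bvec l) : bool :=
  [forall j : 'I_l, (j < i)%N ==> (p.1 ord0 j == p.2 ord0 j)]
  && (p.1 ord0 i == GRing.zero) && (p.2 ord0 i == GRing.one _).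

(* partial distance D_min^(i); the pair set is nonempty and all distances are
   <= l, so l is a neutral starting value for the minimum *)
Definition Dmin (l : nat) (g : bvec l -> bvec l) (i : 'I_l) : nat :=
  \big[minn/l]_(p : bvec l * bvec l | split_pair i p) dH (g p.1) (g p.2).

Definition logb (b x : R) : R := (ln x / ln b)%R.

Definition exponent (l : nat) (g : bvec l -> bvec l) : R :=
  (/ INR l * \big[Rplus/0%R]_(i < l) logb (INR l) (INR (Dmin g i)))%R.

Definition dseq18 : seq nat :=
  [:: 1; 2; 2; 2; 2; 2; 4; 4; 4; 4; 6; 6; 8; 8; 8; 8; 8; 16]%N.

From mathcomp Require Import all_boot all_order all_algebra.
From Stdlib Require Import Reals.
Set Implicit Arguments. Unset Strict Implicit. Unset Printing Implicit Defensive.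
Import GRing.Theory.

(* For a linear kernel, the images of w•0•u and w•1•v differ by xG where the
   first nonzero coordinate of x = w•1•v - w•0•u is x_i = 1, and every such x
   arises from the pair (0, x).  So D_min^(i) is the least weight in the coset
   row_i(G) + span(row_j(G), j > i), a set of 2^(17-i) words that is
   enumerated by computation for the explicit matrix G18; its invertibility is
   certified by an explicit inverse. *)

Section FoldrMinn.
Variable x : nat.

Lemma foldr_minn_le s w : w \in s -> foldr minn x s <= w.
Proof.
elim: s => //= a s IH; rewrite in_cons => /orP[/eqP->|/IH]; first exact: geq_minl.
exact/leq_trans/geq_minr.
Qed.

Lemma foldr_minn_le_init s : foldr minn x s <= x.
Proof. by elim: s => //= a s IH; apply/leq_trans/IH/geq_minr. Qed.

Lemma foldr_minn_mem s : foldr minn x s = x \/ foldr minn x s \in s.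
Proof.
elim: s => [|a s IH] /=; first by left.
rewrite in_cons; case: leqP => _; first by right; rewrite eqxx.
by case: IH => [->|mem]; [left|right; rewrite mem orbT].
Qed.

Lemma eq_foldr_minn s1 s2 : s1 =i s2 -> foldr minn x s1 = foldr minn x s2.
Proof.
have le12 t1 t2 : {subset t2 <= t1} -> foldr minn x t1 <= foldr minn x t2.
  move=> sub; case: (foldr_minn_mem t2) => [->|/sub]; last exact: foldr_minn_le.
  exact: foldr_minn_le_init.
by move=> eq12; apply/eqP; rewrite eqn_leq !le12 // => w; rewrite eq12.
Qed.

Lemma bigmin_foldr (I : finType) (P : pred I) (F : I -> nat) :
  \big[minn/x]_(i | P i) F i = foldr minn x [seq F i | i <- enum P].
Proof. by rewrite foldrE big_map /enum_mem -big_filter. Qed.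

End FoldrMinn.

Section BinaryVectors.
Local Open Scope ring_scope.
Variable l : nat.

Lemma F2_0or1 (x : 'F_2) : x = 0 \/ x = 1.
Proof. by case: x => -[|[|m]] // ?; [left|right]; apply/val_inj. Qed.

Lemma F2_neq0D (x y : 'F_2) : (x + y != 0) = (x != 0) (+) (y != 0).
Proof. by case: (F2_0or1 x) => ->; case: (F2_0or1 y) => ->. Qed.

Lemma F2_neq0_inj (x y : 'F_2) : (x != 0) = (y != 0) -> x = y.
Proof. by case: (F2_0or1 x) => ->; case: (F2_0or1 y) => ->. Qed.

Lemma F2_natr_neq0 (b : bool) : ((b%:R : 'F_2) != 0) = b.
Proof. by case: b. Qed.

Definition bits (v : bvec l) : seq bool := [seq v ord0 j != 0 | j <- enum 'I_l].
Definition weight (s : seq bool) : nat := count idfun s.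
Definition bxor (s t : seq bool) : seq bool := [seq p.1 (+) p.2 | p <- zip s t].

Lemma bits0 : bits 0 = nseq l false.
Proof.
rewrite /bits -[X in nseq X](size_enum_ord l).
by elim: (enum 'I_l) => //= j s ->; rewrite mxE.
Qed.

Lemma bitsD u v : bits (u + v) = bxor (bits u) (bits v).
Proof.
by rewrite /bxor zip_map -map_comp; apply: eq_map => j /=; rewrite mxE F2_neq0D.
Qed.

Lemma dH_bits (a b : bvec l) : dH a b = weight (bits (b - a)).
Proof.
rewrite /dH /weight cardsE cardE /enum_mem size_filter count_map /enum_mem.
rewrite (eq_filter (a2 := predT)) // filter_predT; apply: eq_count => j /=.
by rewrite !mxE subr_eq0 eq_sym.
Qed.

Fixpoint span_bits (rs : seq (seq bool)) : seq (seq bool) :=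
  if rs is r :: rs' then let S := span_bits rs' in S ++ map (bxor r) S
  else [:: nseq l false].

Lemma bits_sum_span (I : eqType) (r : seq I) (f : I -> bvec l) (c : I -> 'F_2) :
  bits (\sum_(j <- r) c j *: f j) \in span_bits [seq bits (f j) | j <- r].
Proof.
elim: r => [|a r IH]; first by rewrite big_nil bits0 mem_seq1.
rewrite big_cons /= mem_cat; case: (F2_0or1 (c a)) => ->.
  by rewrite scale0r add0r IH.
by rewrite scale1r bitsD map_f ?orbT.
Qed.

Lemma span_bits_sum (I : eqType) (r : seq I) (f : I -> bvec l) s :
  uniq r -> s \in span_bits [seq bits (f j) | j <- r] ->
  exists c : I -> 'F_2, s = bits (\sum_(j <- r) c j *: f j).
Proof.
elim: r s => [|a r IH] s /=.
  by move=> _; rewrite inE => /eqP->; exists (fun=> 0); rewrite big_nil bits0.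
case/andP=> a_r /IH {}IH.
have extend c b : exists c' : I -> 'F_2,
    b *: f a + \sum_(j <- r) c j *: f j = \sum_(j <- a :: r) c' j *: f j.
  exists (fun j => if j == a then b else c j); rewrite big_cons eqxx; congr (_ + _).
  by apply: eq_big_seq => j j_r; case: (j =P a) j_r => // -> /(negP a_r).
rewrite mem_cat => /orP[/IH[c ->]|/mapP[t /IH[c ->] ->]].
- by have [c' Ec] := extend c 0; exists c'; rewrite -Ec scale0r add0r.
- by have [c' Ec] := extend c 1; exists c'; rewrite -Ec scale1r bitsD.
Qed.

End BinaryVectors.

Section LinearKernel.
Local Open Scope ring_scope.
Variables (l : nat) (G : 'M['F_2]_l).

Definition first_one (i : 'I_l) (x : bvec l) : bool :=
  [forall j : 'I_l, (j < i)%nat ==> (x ord0 j == 0)] && (x ord0 i == 1).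

Lemma split_pair_first_one i p : split_pair i p -> first_one i (p.2 - p.1).
Proof.
case/andP=> /andP[/forallP eq_prefix /eqP p1i] /eqP p2i; apply/andP; split.
  apply/forallP=> j; apply/implyP=> ji.
  by move/implyP/(_ ji)/eqP: (eq_prefix j); rewrite !mxE => ->; rewrite subrr.
by rewrite !mxE p1i p2i subr0.
Qed.

Lemma first_one_split_pair i x : first_one i x -> split_pair i (0, x).
Proof.
case/andP=> /forallP zero_prefix xi; rewrite /split_pair /= xi !mxE eqxx !andbT.
apply/forallP=> j; apply/implyP=> ji.
by move/implyP/(_ ji): (zero_prefix j); rewrite mxE eq_sym.
Qed.

Definition ords_after (i : 'I_l) : seq 'I_l :=
  [seq j : 'I_l <- enum 'I_l | (i < j)%nat].

Lemma first_one_mulmx i x : first_one i x ->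
  x *m G = row i G + \sum_(j <- ords_after i) x ord0 j *: row j G.
Proof.
case/andP=> /forallP zero_prefix /eqP xi.
rewrite mulmx_sum_row (bigD1 i) //= xi scale1r; congr (_ + _).
rewrite /ords_after big_filter big_enum_cond big_mkcond [RHS]big_mkcond.
apply: eq_bigr => j _; case: (ltngtP j i) => [ji|ij|/val_inj->]; last by rewrite eqxx.
- by move/implyP/(_ ji)/eqP: (zero_prefix j) => ->; rewrite scale0r if_same.
- by rewrite neq_ltn ij orbT.
Qed.

Definition coset_weights (i : 'I_l) : seq nat :=
  [seq weight (bxor (bits (row i G)) s)
    | s <- span_bits l [seq bits (row j G) | j <- ords_after i]].

Lemma coset_weightsP i w :
  reflect (exists2 x, first_one i x & weight (bits (x *m G)) = w)
          (w \in coset_weights i).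
Proof.
have uniq_ords_after : uniq (ords_after i) by rewrite filter_uniq ?enum_uniq.
apply: (iffP mapP) => [[s /(span_bits_sum uniq_ords_after)[c ->] ->]|[x fx <-]].
- pose x : bvec l := \row_k (if (k < i)%nat then 0 else if k == i then 1 else c k).
  have fx : first_one i x.
    rewrite /first_one mxE ltnn eqxx andbT.
    by apply/forallP=> j; apply/implyP=> ji; rewrite mxE ji.
  exists x => //; rewrite (first_one_mulmx fx) bitsD; congr (weight (bxor _ (bits _))).
  apply: eq_big_seq => j; rewrite mem_filter => /andP[ij _].
  by rewrite mxE ltnNge ltnW //= (gtn_eqF ij : (j == i) = false).
- exists (bits (\sum_(j <- ords_after i) x ord0 j *: row j G)).
    exact: bits_sum_span.
  by rewrite (first_one_mulmx fx) bitsD.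
Qed.

Lemma Dmin_lin_kernel i : Dmin (lin_kernel G) i = foldr minn l (coset_weights i).
Proof.
rewrite /Dmin bigmin_foldr; apply: eq_foldr_minn => w; apply/mapP/coset_weightsP.
- case=> p; rewrite mem_enum => /split_pair_first_one fp ->.
  by exists (p.2 - p.1); rewrite // /lin_kernel dH_bits mulmxBl.
- case=> x /first_one_split_pair sx <-; exists (0, x); first by rewrite mem_enum.
  by rewrite /lin_kernel dH_bits mul0mx subr0.
Qed.

End LinearKernel.

Lemma lin_kernel_is_kernel l (G : 'M['F_2]_l) : G \in unitmx -> is_kernel (lin_kernel G).
Proof.
by move=> unitG; exists (mulmx^~ (invmx G)) => u; [apply: mulmxK | apply: mulmxKV].
Qed.

Section BitMatrices.
Local Open Scope ring_scope.
Variable l : nat.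

Definition mx_of_bits (rs : seq (seq bool)) : 'M['F_2]_l :=
  \matrix_(j, k) (nth false (nth [::] rs j) k)%:R.

Definition bit_row (rs : seq (seq bool)) (j : nat) : seq bool :=
  [seq nth false (nth [::] rs j) k | k <- iota 0 l].

Lemma bits_row_mx_of_bits rs (j : 'I_l) : bits (row j (mx_of_bits rs)) = bit_row rs j.
Proof.
rewrite /bits /bit_row -val_enum_ord -map_comp.
by apply: eq_map => k /=; rewrite !mxE F2_natr_neq0.
Qed.

Definition bit_coset_weights (rs : seq (seq bool)) (i : nat) : seq nat :=
  [seq weight (bxor (bit_row rs i) s)
    | s <- span_bits l [seq bit_row rs j | j <- iota 0 l & (i < j)%nat]].

Lemma coset_weights_mx_of_bits rs (i : 'I_l) :
  coset_weights (mx_of_bits rs) i = bit_coset_weights rs i.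
Proof.
rewrite /coset_weights /bit_coset_weights bits_row_mx_of_bits.
rewrite (eq_map (bits_row_mx_of_bits rs)) (map_comp (bit_row rs) val).
by rewrite /ords_after -filter_map val_enum_ord.
Qed.

Definition bit_mul (rs ss : seq (seq bool)) (i k : nat) : bool :=
  foldr addb false
    [seq nth false (nth [::] rs i) j && nth false (nth [::] ss j) k | j <- iota 0 l].

Definition bit_inverse (rs ss : seq (seq bool)) : bool :=
  all (fun i => all (fun k => bit_mul rs ss i k == (i == k)) (iota 0 l)) (iota 0 l).

Lemma mulmx_bits_neq0 rs ss (i k : 'I_l) :
  ((mx_of_bits rs *m mx_of_bits ss) i k != 0) = bit_mul rs ss i k.
Proof.
have neq00 : ((0 : 'F_2) != 0) = false by rewrite eqxx.
rewrite mxE (big_morph _ F2_neq0D neq00) /bit_mul foldrE big_map.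
rewrite -val_enum_ord big_map big_enum; apply: eq_bigr => j _.
by rewrite !mxE mulf_eq0 negb_or !F2_natr_neq0.
Qed.

Lemma mx_of_bits_unit rs ss : bit_inverse rs ss -> mx_of_bits rs \in unitmx.
Proof.
move=> inv; suff /mulmx1_unit[] : mx_of_bits rs *m mx_of_bits ss = 1%:M by [].
apply/matrixP=> i k; apply: F2_neq0_inj; rewrite mulmx_bits_neq0 !mxE F2_natr_neq0.
have iota_ord (j : 'I_l) : val j \in iota 0 l by rewrite mem_iota ltn_ord.
by move/allP/(_ _ (iota_ord i))/allP/(_ _ (iota_ord k))/eqP: inv.
Qed.

End BitMatrices.

Definition G18_rows : seq (seq bool) := map (map odd)
  [:: [:: 1; 1; 1; 1; 1; 0; 0; 0; 1; 0; 0; 1; 1; 0; 0; 1; 0; 0];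
   [:: 1; 0; 1; 1; 0; 0; 0; 1; 0; 1; 0; 1; 0; 1; 0; 0; 0; 1];
   [:: 1; 1; 0; 0; 1; 0; 1; 1; 1; 0; 1; 1; 1; 1; 0; 1; 0; 1];
   [:: 1; 1; 1; 1; 1; 0; 1; 0; 0; 0; 1; 0; 1; 1; 0; 1; 0; 0];
   [:: 1; 0; 0; 1; 1; 1; 0; 0; 1; 0; 0; 0; 0; 1; 1; 0; 1; 0];
   [:: 1; 1; 0; 1; 0; 0; 1; 0; 0; 0; 0; 1; 1; 1; 0; 1; 0; 0];
   [:: 1; 1; 1; 1; 1; 0; 0; 1; 1; 0; 0; 0; 0; 0; 0; 0; 1; 0];
   [:: 0; 1; 1; 1; 0; 0; 0; 0; 0; 1; 0; 0; 1; 0; 1; 0; 0; 0];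
   [:: 1; 0; 0; 1; 1; 0; 1; 1; 0; 1; 0; 1; 0; 0; 1; 1; 0; 1];
   [:: 1; 0; 0; 1; 0; 0; 0; 1; 0; 0; 1; 1; 0; 1; 0; 0; 1; 1];
   [:: 0; 1; 0; 0; 1; 0; 0; 1; 1; 1; 1; 0; 1; 1; 1; 0; 1; 0];
   [:: 1; 1; 0; 0; 0; 0; 1; 1; 0; 1; 0; 0; 0; 0; 0; 0; 0; 1];
   [:: 0; 1; 0; 0; 1; 0; 0; 1; 0; 1; 0; 1; 1; 0; 0; 0; 1; 1];
   [:: 1; 0; 1; 1; 1; 0; 0; 1; 0; 0; 1; 1; 0; 0; 0; 0; 1; 0];
   [:: 0; 0; 0; 1; 0; 1; 0; 1; 0; 1; 1; 1; 0; 0; 0; 1; 0; 1];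
   [:: 1; 0; 0; 1; 1; 0; 0; 1; 0; 1; 0; 0; 1; 0; 1; 1; 0; 0];
   [:: 0; 1; 1; 0; 0; 1; 1; 1; 0; 1; 1; 0; 1; 1; 0; 1; 1; 1];
   [:: 1; 1; 1; 1; 1; 1; 0; 1; 1; 1; 1; 1; 1; 0; 1; 1; 1; 1]].

Definition G18_inv_rows : seq (seq bool) := map (map odd)
  [:: [:: 1; 0; 0; 1; 1; 1; 1; 0; 0; 1; 1; 1; 1; 0; 0; 0; 1; 0];
   [:: 1; 0; 1; 0; 0; 1; 0; 1; 1; 1; 1; 1; 0; 1; 1; 0; 0; 1];
   [:: 1; 1; 0; 0; 0; 1; 0; 1; 0; 0; 1; 0; 1; 1; 1; 0; 1; 0];
   [:: 1; 0; 0; 0; 0; 0; 0; 0; 0; 1; 0; 1; 0; 1; 0; 1; 1; 1];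
   [:: 1; 0; 1; 0; 1; 0; 1; 0; 1; 1; 0; 1; 1; 1; 0; 0; 1; 0];
   [:: 1; 1; 1; 1; 0; 0; 1; 1; 0; 0; 0; 1; 0; 1; 1; 0; 1; 1];
   [:: 1; 1; 1; 0; 0; 0; 1; 1; 1; 1; 0; 0; 0; 0; 0; 1; 1; 1];
   [:: 1; 0; 0; 0; 0; 1; 0; 1; 1; 0; 0; 1; 0; 0; 0; 1; 1; 1];
   [:: 1; 1; 0; 1; 1; 1; 0; 0; 0; 0; 0; 0; 0; 0; 0; 0; 0; 1];
   [:: 1; 1; 1; 0; 0; 1; 1; 0; 0; 1; 0; 0; 1; 0; 1; 1; 0; 1];
   [:: 1; 1; 1; 0; 1; 1; 0; 0; 1; 0; 0; 1; 1; 1; 0; 1; 0; 1];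
   [:: 1; 0; 0; 1; 0; 1; 1; 1; 0; 1; 1; 0; 1; 1; 1; 1; 0; 1];
   [:: 1; 1; 0; 0; 1; 1; 1; 1; 1; 0; 1; 0; 1; 0; 1; 0; 0; 0];
   [:: 1; 1; 0; 1; 0; 1; 0; 0; 0; 0; 1; 1; 0; 0; 1; 1; 1; 0];
   [:: 1; 1; 0; 0; 1; 0; 0; 0; 0; 1; 1; 0; 1; 1; 0; 0; 0; 1];
   [:: 1; 1; 0; 1; 0; 0; 0; 0; 1; 1; 1; 0; 1; 1; 0; 0; 0; 0];
   [:: 1; 0; 0; 0; 1; 1; 1; 1; 1; 0; 1; 1; 1; 0; 0; 0; 1; 0];
   [:: 1; 0; 1; 1; 1; 0; 1; 1; 1; 0; 0; 0; 0; 1; 0; 1; 1; 0]].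

Definition G18 : 'M['F_2]_18 := mx_of_bits 18 G18_rows.

Lemma G18_unit : G18 \in unitmx.
Proof. by apply: (mx_of_bits_unit (ss := G18_inv_rows)); vm_compute. Qed.

Lemma G18_min_coset_weights :
  [seq foldr minn 18 (bit_coset_weights 18 G18_rows i) | i <- iota 0 18] = dseq18.
Proof. by vm_compute. Qed.

Lemma Dmin_G18 (i : 'I_18) : Dmin (lin_kernel G18) i = nth 0 dseq18 i.
Proof.
have i_lt : (i < size (iota 0 18))%N by rewrite size_iota.
rewrite Dmin_lin_kernel coset_weights_mx_of_bits -G18_min_coset_weights.
(* [add0n] matters: closing [0 + i = i] by conversion would evaluate the weights *)
by rewrite (nth_map 0 _ _ i_lt) nth_iota ?add0n.
Qed.

Theorem mainTheorem18 :
  (exists G : 'M['F_2]_18, G \in unitmx /\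
     forall i : 'I_18, Dmin (lin_kernel G) i = @nth nat O dseq18 i) /\
  (exists g : bvec 18 -> bvec 18, is_kernel g /\
     (exponent g >= / 18 * \big[Rplus/0%R]_(i < 18)
                             logb 18 (INR (@nth nat O dseq18 i)))%R).
Proof.
split; first by exists G18; split; [exact: G18_unit | exact: Dmin_G18].
exists (lin_kernel G18); split; first exact: lin_kernel_is_kernel G18_unit.
rewrite /exponent INR_IZR_INZ; right; congr (_ * _)%R.
by apply: eq_bigr => i _; rewrite Dmin_G18.
Qed.
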